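(* If $0\le p\le\frac12<t\le1$, then bold play is optimal, i.e. $\pi(p,t)=p$.
   Context: Let $\beta_1,\beta_2,\ldots$ be independent Bernoulli random variables with success probability $p$. A stake sequence is a sequence $\gamma=(c_1,c_2,\ldots)$ of non-negative reals with $c_1\ge c_2\ge\cdots$ and $\sum_i c_i=1$; write $S_\gamma=\sum_i c_i\beta_i$. For $0\le p\le t\le 1$ define $\pi(p,t)=\sup\{\mathbf P(S_\gamma\ge t)\mid \gamma \text{ a stake sequence}\}$. Bold play for threshold $t$ is the stake sequence with $c_i=\frac1m$ for $i\le m$ and $c_i=0$ for $i>m$, where $m=\lfloor 1/t\rfloor$; it is optimal if it attains $\pi(p,t)$. For $t>\frac12$ bold play is $c_1=1$, with success probability $p$. *)

From HB Require Import structures.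
From mathcomp Require Import all_boot all_order all_algebra.
From mathcomp Require Import all_classical all_reals all_analysis.
Set Implicit Arguments. Unset Strict Implicit. Unset Printing Implicit Defensive.
Import Order.TTheory GRing.Theory Num.Theory.
Import numFieldNormedType.Exports.
Local Open Scope classical_set_scope.
Local Open Scope ring_scope.

(* A sequence of independent Bernoulli(p) random variables (valued in bool,
   true = success) on a probability space P: each event {beta i} is
   measurable with probability p, and the events are mutually independent:
   for every finite set of indices I (a duplicate-free list) and every pattern b of outcomes,
   P(/\_{i in I} beta i = b i) = prod_{i in I} P(beta i = b i). *)
Definition iid_bernoulli {R : realType} {d : measure_display}
  {T : measurableType d} (P : probability T R) (p : R) (beta : nat -> T -> bool) : Prop :=
  (forall i, measurable [set w | beta i w]) /\
  (forall i, P [set w | beta i w] = p%:E) /\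
  (forall (I : seq nat) (b : nat -> bool), uniq I ->
      P (\bigcap_(i in [set` I]) [set w | beta i w = b i])
      = (\prod_(i <- I) P [set w | beta i w = b i])%E).

Definition stake_seq {R : realType} (c : nat -> R) : Prop :=
  (forall i, 0 <= c i) /\ (forall i, c i.+1 <= c i) /\ (series c @ \oo --> (1 : R)).

Definition S_gamma {R : realType} {T : Type} (beta : nat -> T -> bool)
  (c : nat -> R) (w : T) : R :=
  limn (series (fun i => c i * (beta i w)%:R)).

Definition pi_opt {R : realType} {d : measure_display} {T : measurableType d}
  (P : probability T R) (beta : nat -> T -> bool) (t : R) : \bar R :=
  ereal_sup [set P [set w | t <= S_gamma beta c w] | c in @stake_seq R].

(* Bold play wins exactly when the first bet succeeds, that is with probability p.
   Conversely, fix a stake sequence and N so large that the stakes after the first N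
   total less than 2t - 1.  A win then forces the first N bets to collect some
   s > (c_0 + ... + c_{N-1}) / 2.  Let w_q(s) be the probability that independent
   Bernoulli(q) bets with these stakes collect at least s.  Conditioning on the first
   bet gives w_{1/2}(s) + w_{1/2}(s') <= 1 whenever s + s' exceeds the total stake
   (an outcome and its complement cannot both win), so w_{1/2}(s) <= 1/2.  Writing
   p = 2^-k with k >= 1, convexity of x^k turns the same conditioning into
   w_p(s) <= w_{1/2}(s)^k, which is at most 2^-k = p. *)

From HB Require Import structures.
From mathcomp Require Import all_boot all_order all_algebra.
From mathcomp Require Import all_classical all_reals all_analysis.
From mathcomp Require Import measurable_realfun ring lra.
Import Order.TTheory GRing.Theory Num.Theory.
Import numFieldNormedType.Exports.
Local Open Scope classical_set_scope.
Local Open Scope ring_scope.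

Fixpoint bitseqs (n : nat) : seq bitseq :=
  if n is n'.+1 then [seq true :: bs | bs <- bitseqs n'] ++ [seq false :: bs | bs <- bitseqs n']
  else [:: [::]].

Lemma mem_bitseqs n bs : (bs \in bitseqs n) = (size bs == n).
Proof.
elim: n bs => [|n IHn] [|b bs] //=.
  by rewrite mem_cat; apply/norP; split; apply/mapP => -[].
have mem_cons b' : (b :: bs \in [seq b' :: x | x <- bitseqs n]) = (b == b') && (size bs == n).
  rewrite -IHn; apply/mapP/andP => [[x ? [-> ->]] | [/eqP -> ?]]; last by exists bs.
  by rewrite eqxx.
by rewrite mem_cat !mem_cons {mem_cons}; case: b; rewrite /= ?orbF.
Qed.

Lemma bitseqs_uniq n : uniq (bitseqs n).
Proof.
elim: n => //= n IHn; have cons_inj (b : bool) : injective (cons b) by move=> x y [].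
rewrite cat_uniq !(map_inj_uniq (cons_inj _)) IHn /= andbT.
by apply/hasP => -[_ /mapP[x _ ->] /mapP[]].
Qed.

Section WinProbability.
Context {R : realType}.
Implicit Types (p s : R) (cs : seq R) (bs : bitseq).

Definition gain cs bs : R := \sum_(i < size cs) cs`_i * (nth false bs i)%:R.

Definition bernoulli_weight p bs : R := \prod_(b <- bs) (if b then p else 1 - p).

Definition win_prob p cs s : R :=
  \sum_(bs <- bitseqs (size cs)) (s <= gain cs bs)%R%:R * bernoulli_weight p bs.

Lemma win_prob_nil p s : win_prob p [::] s = (s <= 0)%R%:R.
Proof. by rewrite /win_prob big_seq1 /bernoulli_weight big_nil mulr1 /gain big_ord0. Qed.

Lemma gain_cons c cs b bs : gain (c :: cs) (b :: bs) = c * b%:R + gain cs bs.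
Proof. by rewrite /gain big_ord_recl. Qed.

Lemma win_prob_cons p c cs s :
  win_prob p (c :: cs) s = p * win_prob p cs (s - c) + (1 - p) * win_prob p cs s.
Proof.
rewrite /win_prob /= big_cat !big_map !big_distrr /=.
congr (_ + _); apply: eq_bigr => bs _; rewrite gain_cons /bernoulli_weight big_cons /=.
  by rewrite mulr1 lerBlDl mulrCA.
by rewrite mulr0 add0r mulrCA.
Qed.

Section Weights.
Variable p : R.
Hypotheses (p_ge0 : 0 <= p) (p_le1 : p <= 1).

Lemma bernoulli_weight_ge0 bs : 0 <= bernoulli_weight p bs.
Proof. by apply: prodr_ge0 => -[] _; rewrite ?subr_ge0. Qed.

Lemma win_prob_ge0 cs s : 0 <= win_prob p cs s.
Proof. by apply: sumr_ge0 => bs _; rewrite mulr_ge0 ?bernoulli_weight_ge0. Qed.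

Lemma le_win_prob cs s1 s2 : s1 <= s2 -> win_prob p cs s2 <= win_prob p cs s1.
Proof.
move=> s12; apply: ler_sum => bs _; apply: ler_wpM2r; first exact: bernoulli_weight_ge0.
by rewrite ler_nat; case: (boolP (s2 <= _)) => // /(le_trans s12) ->.
Qed.
End Weights.

Lemma win_prob_half_add_le1 cs s s' : \sum_(c <- cs) c < s + s' ->
  win_prob (1/2) cs s + win_prob (1/2) cs s' <= 1.
Proof.
elim: cs s s' => [|c cs IHcs] s s'.
  by rewrite big_nil !win_prob_nil => ?; case: (lerP s 0); case: (lerP s' 0) => /=; lra.
rewrite big_cons => lt_sum; rewrite !win_prob_cons.
have := IHcs (s - c) s' ltac:(lra); have := IHcs s (s' - c) ltac:(lra); lra.
Qed.

Lemma win_prob0 cs s : 0 < s -> win_prob 0 cs s = 0.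
Proof.
elim: cs s => [|c cs IHcs] s s_gt0; first by rewrite win_prob_nil leNgt s_gt0.
by rewrite win_prob_cons mul0r add0r subr0 mul1r IHcs.
Qed.

Lemma powR_le1 (x k : R) : 0 <= x <= 1 -> 0 <= k -> x `^ k <= 1.
Proof.
move=> /andP[x_ge0 x_le1] k_ge0.
by have := ge0_ler_powR k_ge0 _ _ x_le1; rewrite powR1 !nnegrE; apply.
Qed.

Lemma powR_midpoint_ge (a b k : R) : 0 <= b <= a -> 1 <= k ->
  (1/2) `^ k * a `^ k + (1 - (1/2) `^ k) * b `^ k <= ((a + b) / 2) `^ k.
Proof.
move=> /andP[b_ge0 le_ba] k_ge1; have k_neq0 : k != 0 by rewrite gt_eqF ?(lt_le_trans ltr01).
have [a0|a_neq0] := eqVneq a 0.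
  have -> : b = 0 by apply/eqP; rewrite eq_le b_ge0 -a0 le_ba.
  by rewrite a0 addr0 mul0r !powR0 // !mulr0 addr0.
(* With m the midpoint, a = tau (2m) + (1 - tau) m and b = tau 0 + (1 - tau) m. *)
set m := (a + b) / 2; set tau := (a - b) / (a + b).
have a_gt0 : 0 < a by rewrite lt_neqAle eq_sym a_neq0 (le_trans b_ge0).
have m_gt0 : 0 < m by rewrite /m; lra.
have tau_ge0 : 0 <= tau by rewrite divr_ge0 //; lra.
have tau_le1 : tau <= 1 by rewrite ler_pdivrMr; lra.
have convex x y : 0 <= x -> 0 <= y ->
    (tau * x + (1 - tau) * y) `^ k <= tau * x `^ k + (1 - tau) * y `^ k.
  move=> x_ge0 y_ge0; have := convex_powR k_ge1 (Itv01 tau_ge0 tau_le1).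
  rewrite /= => /(_ x y); rewrite !inE /= !in_itv /= !andbT x_ge0 y_ge0 !convRE.
  by apply.
have := convex (2 * m) m ltac:(lra) ltac:(lra).
have := convex 0 m ltac:(lra) ltac:(lra).
have -> : tau * (2 * m) + (1 - tau) * m = a by rewrite /tau /m; field; lra.
have -> : tau * 0 + (1 - tau) * m = b by rewrite /tau /m; field; lra.
rewrite powR0 // mulr0 add0r powRM; [|lra|lra].
have half_two : (1/2) `^ k * 2 `^ k = 1 :> R.
  by rewrite -powRM; [rewrite (_ : 1/2 * 2 = 1) ?powR1|..]; lra.
set X := m `^ k; set Y := 2 `^ k in half_two *; set q := (1/2) `^ k in half_two *.
have q_ge0 : 0 <= q := powR_ge0 _ _.
have q_le1 : q <= 1 by apply: powR_le1; lra.
move=> le_b le_a.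
apply: (le_trans (y := q * (tau * (Y * X) + (1 - tau) * X) + (1 - q) * ((1 - tau) * X))).
  by apply: lerD; apply: ler_wpM2l; lra.
rewrite (_ : _ + _ = X + tau * X * (q * Y - 1)); last by ring.
by rewrite half_two subrr mulr0 addr0.
Qed.

Lemma win_prob_le_powR (k : R) (cs : seq R) (s : R) :
  1 <= k -> {in cs, forall c, 0 <= c} ->
  win_prob ((1/2) `^ k) cs s <= win_prob (1/2) cs s `^ k.
Proof.
move=> k_ge1; set q := (1/2) `^ k.
have q_ge0 : 0 <= q := powR_ge0 _ _.
have q_le1 : q <= 1 by apply: powR_le1; lra.
have half_ge0 : 0 <= 1/2 :> R by lra.
have half_le1 : 1/2 <= 1 :> R by lra.
elim: cs s => [|c cs IHcs] s cs_ge0.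
  by rewrite !win_prob_nil; case: (s <= 0); rewrite ?powR1 ?powR_ge0.
have c_ge0 : 0 <= c by apply: cs_ge0; rewrite mem_head.
have {}IHcs s' : win_prob q cs s' <= win_prob (1/2) cs s' `^ k.
  by apply: IHcs => x x_cs; apply: cs_ge0; rewrite in_cons x_cs orbT.
rewrite !win_prob_cons; set a := win_prob (1/2) cs (s - c); set b := win_prob (1/2) cs s.
have le_ba : b <= a by apply: le_win_prob; lra.
apply: (le_trans (y := q * a `^ k + (1 - q) * b `^ k)).
  by apply: lerD; apply: ler_wpM2l; rewrite ?IHcs ?subr_ge0.
rewrite (_ : 1/2 * a + (1 - 1/2) * b = (a + b) / 2); last by field.
by apply: powR_midpoint_ge; rewrite ?win_prob_ge0 ?le_ba.
Qed.

Lemma half_powR_onto (p : R) : 0 < p <= 1/2 ->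
  exists2 k, 1 <= k & p = (1/2) `^ k.
Proof.
move=> /andP[p_gt0 p_le_half].
have ln_half_lt0 : ln (1/2 : R) < 0 by rewrite ln_lt0 //; apply/andP; split; lra.
exists (ln p / ln (1/2)).
  by rewrite ler_ndivlMr // !mul1r ler_ln ?posrE ?invr_gt0; lra.
rewrite /powR ifF; last by apply/negbTE; lra.
by rewrite mulfVK ?lnK ?posrE // lt_eqF.
Qed.

Lemma win_prob_le (p : R) (cs : seq R) (s : R) :
  0 <= p <= 1/2 -> {in cs, forall c, 0 <= c} -> \sum_(c <- cs) c < 2 * s ->
  win_prob p cs s <= p.
Proof.
move=> /andP[p_ge0 p_le_half] cs_ge0 sum_lt.
have sum_ge0 : 0 <= \sum_(c <- cs) c by rewrite big_seq sumr_ge0.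
have [->|p_neq0] := eqVneq p 0; first by rewrite win_prob0 //; lra.
have [k k_ge1 ->] : exists2 k, 1 <= k & p = (1/2) `^ k.
  by apply: half_powR_onto; rewrite lt_neqAle eq_sym p_neq0 p_ge0.
apply: (le_trans (win_prob_le_powR _ _ s k_ge1 cs_ge0)).
apply: ge0_ler_powR; rewrite ?nnegrE ?win_prob_ge0 //; [lra..|].
by have := win_prob_half_add_le1 cs s s ltac:(lra); lra.
Qed.

End WinProbability.

Section PartialGains.
Context {R : realType} {T : Type}.
Variable beta : nat -> T -> bool.
Implicit Types (c : nat -> R) (w : T).

Definition prefix n w : bitseq := [seq beta i w | i <- iota 0 n].

Definition partial_gain c n w : R := series (fun i => c i * (beta i w)%:R) n.

Lemma size_prefix n w : size (prefix n w) = n.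
Proof. by rewrite size_map size_iota. Qed.

Lemma prefix_eq_bigcap n bs : size bs = n ->
  [set w | prefix n w = bs] = \bigcap_(i in [set` iota 0 n]) [set w | beta i w = nth false bs i].
Proof.
move=> size_bs; apply/seteqP; split => w /=.
  move=> <- i /=; rewrite mem_iota add0n => /andP[_ i_lt].
  by rewrite (nth_map 0) ?size_iota ?nth_iota.
move=> beta_eq; apply: (@eq_from_nth _ false); rewrite size_prefix // => i i_lt.
by rewrite (nth_map 0) ?size_iota // nth_iota // beta_eq //= mem_iota.
Qed.

Lemma prefix_in_cons n bs L :
  [set w | prefix n w \in bs :: L] = [set w | prefix n w = bs] `|` [set w | prefix n w \in L].
Proof.
apply/seteqP; split => w /=; rewrite in_cons; first by case/orP => [/eqP|]; [left|right].
by case=> [->|->]; rewrite ?eqxx ?orbT.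
Qed.

Lemma partial_gain_prefix c n w : partial_gain c n w = gain (mkseq c n) (prefix n w).
Proof.
rewrite /partial_gain seriesEnat /= /gain size_mkseq big_mkord; apply: eq_bigr => i _.
by rewrite nth_mkseq // (nth_map 0) ?size_iota // nth_iota.
Qed.

Lemma partial_gain_ge_prefix c n s :
  [set w | s <= partial_gain c n w] =
  [set w | prefix n w \in [seq bs <- bitseqs n | s <= gain (mkseq c n) bs]].
Proof.
apply/seteqP; split => w /=;
  by rewrite mem_filter mem_bitseqs size_prefix eqxx andbT partial_gain_prefix.
Qed.

End PartialGains.

Section StakeSequences.
Context {R : realType}.
Implicit Types (c u : nat -> R).

Lemma mulr_bool_le (x : R) (b : bool) : 0 <= x -> x * b%:R <= x.
Proof. by case: b; rewrite ?mulr1 ?mulr0. Qed.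

Lemma ge0_series_nondecreasing u : (forall i, 0 <= u i) ->
  {homo series u : n m / (n <= m)%N >-> n <= m}.
Proof.
move=> u_ge0 n m le_nm; rewrite !seriesEnat /=.
exact: (nondecreasing_series (u_ := u) (P := xpredT)).
Qed.

Lemma stake_series_le1 c n : stake_seq c -> series c n <= 1.
Proof.
move=> [c_ge0 [_ c_cvg]]; rewrite -(cvg_lim (@Rhausdorff R) c_cvg).
exact/nondecreasing_cvgn_le/(cvgP _ c_cvg)/ge0_series_nondecreasing.
Qed.

Lemma stake_tail_lt c e : stake_seq c -> 0 < e -> exists N, 1 - series c N < e.
Proof.
move=> [_ [_ c_cvg]] e_gt0; have [N _ near_N] := (cvgrPdist_lt _ _).1 c_cvg _ e_gt0.
by exists N; apply: le_lt_trans (near_N N (leqnn N)); exact: ler_norm.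
Qed.

Definition bold_play : nat -> R := fun i => (i == 0)%:R.

Lemma series_bold_play n : (0 < n)%N -> series bold_play n = 1.
Proof.
move=> n_gt0; rewrite seriesEnat /= big_ltn // big1_seq ?addr0 // => i.
by rewrite mem_index_iota; case: i.
Qed.

Lemma bold_play_stake : stake_seq bold_play.
Proof.
split; first by move=> i; rewrite ler0n.
split; first by move=> i; rewrite ler_nat; case: i.
by apply: cvg_near_cst; exists 1%N => // n /= /series_bold_play.
Qed.

Context {T : Type}.
Variable beta : nat -> T -> bool.
Implicit Types (w : T).

Lemma partial_gain_nondecreasing c : (forall i, 0 <= c i) -> forall w,
  {homo partial_gain beta c ^~ w : n m / (n <= m)%N >-> n <= m}.
Proof. by move=> c_ge0 w; apply: ge0_series_nondecreasing => i; rewrite mulr_ge0. Qed.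

Lemma partial_gain_increment_le c w n m : (forall i, 0 <= c i) -> (n <= m)%N ->
  partial_gain beta c m w - partial_gain beta c n w <= series c m - series c n.
Proof.
move=> c_ge0 le_nm; rewrite !sub_series_geq //.
by apply: ler_sum => i _; apply: mulr_bool_le.
Qed.

Lemma partial_gain_cvg c w : stake_seq c -> cvgn (partial_gain beta c ^~ w).
Proof.
move=> c_stake; have [c_ge0 _] := c_stake.
apply: nondecreasing_is_cvgn; first exact: partial_gain_nondecreasing.
exists 1 => _ [n _ <-]; apply: le_trans (stake_series_le1 c n c_stake).
rewrite /partial_gain !seriesEnat /=.
by apply: ler_sum => i _; apply: mulr_bool_le.
Qed.

Lemma S_gamma_le_partial_gain c w n : stake_seq c ->
  S_gamma beta c w <= partial_gain beta c n w + (1 - series c n).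
Proof.
move=> c_stake; have [c_ge0 _] := c_stake.
apply: limr_le; first exact: partial_gain_cvg.
apply: nearW => m; rewrite -/(partial_gain beta c m w); have [le_nm|lt_mn] := leqP n m.
  have := partial_gain_increment_le c w n m c_ge0 le_nm.
  by have := stake_series_le1 c m c_stake; lra.
have := partial_gain_nondecreasing c c_ge0 w m n (ltnW lt_mn).
by have := stake_series_le1 c n c_stake; lra.
Qed.

Lemma S_gamma_bold_play w : S_gamma beta bold_play w = (beta 0%N w)%:R.
Proof.
apply: (lim_near_cst (@Rhausdorff R)); exists 1%N => // n /= n_gt0.
rewrite seriesEnat /= big_ltn // big1_seq ?addr0 ?mul1r // => i.
by rewrite mem_index_iota; case: i => // i _; rewrite mul0r.
Qed.

End StakeSequences.

Section IidBernoulli.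
Context {R : realType} {d : measure_display} {T : measurableType d}.
Variables (P : probability T R) (p : R) (beta : nat -> T -> bool).
Hypothesis iid : iid_bernoulli P p beta.

Let beta_false i : [set w | beta i w = false] = ~` [set w | beta i w].
Proof. by apply/seteqP; split => w /=; case: (beta i w). Qed.

Lemma measurable_beta_eq i b : measurable [set w | beta i w = b].
Proof.
have [beta_meas _] := iid; case: b; first exact: beta_meas.
by rewrite beta_false; apply/measurableC/beta_meas.
Qed.

Lemma prob_beta_eq i b : P [set w | beta i w = b] = (if b then p else 1 - p)%:E.
Proof.
have [beta_meas [beta_prob _]] := iid; case: b; first exact: beta_prob.
by rewrite beta_false probability_setC // beta_prob.
Qed.

Lemma measurable_prefix_eq n bs : measurable [set w | prefix beta n w = bs].
Proof.
have [size_bs|size_bs] := eqVneq (size bs) n.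
  by rewrite prefix_eq_bigcap //; apply: bigcap_measurableType => i _; exact: measurable_beta_eq.
rewrite (_ : [set w | _] = set0) //; apply/seteqP; split => w //= prefix_w.
by move: size_bs; rewrite -prefix_w size_prefix eqxx.
Qed.

Lemma prob_prefix_eq n bs : size bs = n ->
  P [set w | prefix beta n w = bs] = (bernoulli_weight p bs)%:E.
Proof.
have [_ [_ beta_indep]] := iid; move=> size_bs.
rewrite prefix_eq_bigcap // beta_indep ?iota_uniq //.
under eq_bigr => i _ do rewrite prob_beta_eq.
by rewrite prodEFin /bernoulli_weight -{2}(mkseq_nth false bs) /mkseq big_map size_bs.
Qed.

Lemma measurable_prefix_in n (L : seq bitseq) : measurable [set w | prefix beta n w \in L].
Proof.
elim: L => [|bs L IHL]; first by rewrite (_ : [set w | _] = set0) //; apply/seteqP; split.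
by rewrite prefix_in_cons; apply: measurableU => //; exact: measurable_prefix_eq.
Qed.

Lemma prob_prefix_in n (L : seq bitseq) : uniq L -> all (fun bs => size bs == n) L ->
  P [set w | prefix beta n w \in L] = (\sum_(bs <- L) bernoulli_weight p bs)%:E.
Proof.
elim: L => [|bs L IHL].
  by rewrite big_nil (_ : [set w | _] = set0) ?measure0 //; apply/seteqP; split.
move=> /= /andP[bs_notin uniq_L] /andP[/eqP size_bs all_L].
rewrite prefix_in_cons big_cons EFinD -(prob_prefix_eq _ _ size_bs) -IHL //; apply: measureU.
- exact: measurable_prefix_eq.
- exact: measurable_prefix_in.
by apply/seteqP; split => w //= [-> bs_in]; rewrite bs_in in bs_notin.
Qed.

Lemma measurable_partial_gain_ge (c : nat -> R) n s :
  measurable [set w | s <= partial_gain beta c n w].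
Proof. by rewrite partial_gain_ge_prefix; exact: measurable_prefix_in. Qed.

Lemma prob_partial_gain_ge (c : nat -> R) n s :
  P [set w | s <= partial_gain beta c n w] = (win_prob p (mkseq c n) s)%:E.
Proof.
rewrite partial_gain_ge_prefix prob_prefix_in ?filter_uniq ?bitseqs_uniq //; last first.
  by apply/allP => bs; rewrite mem_filter mem_bitseqs => /andP[].
congr EFin; rewrite /win_prob size_mkseq big_filter big_mkcond /=; apply: eq_bigr => bs _.
by case: ifP; rewrite ?mul1r ?mul0r.
Qed.

Lemma measurable_S_gamma_ge (c : nat -> R) t : stake_seq c ->
  measurable [set w | t <= S_gamma beta c w].
Proof.
move=> c_stake; have [beta_meas _] := iid.
have partial_gain_meas n : measurable_fun setT (partial_gain beta c n).
  apply: (eq_measurable_fun (fun w => \sum_(0 <= i < n) c i * (beta i w)%:R)).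
    by move=> w _; rewrite /partial_gain seriesEnat.
  apply: measurable_sum => i.
  apply: (eq_measurable_fun (fun w => c i * \1_[set w | beta i w] w)).
    move=> w _; rewrite indicE; case: (boolP (beta i w)) => [beta_w|/negbTE beta_w].
      by rewrite mem_set.
    by rewrite memNset //= beta_w.
  exact/measurable_funM/measurable_indic/beta_meas.
have S_meas : measurable_fun setT (S_gamma beta c).
  by apply: (measurable_fun_cvg partial_gain_meas) => w _; exact: partial_gain_cvg.
rewrite -(setTI [set w | _]) (_ : [set w | _] = S_gamma beta c @^-1` `[t, +oo[).
  exact: S_meas.
by apply/seteqP; split => w /=; rewrite in_itv /= andbT.
Qed.

Lemma prob_S_gamma_ge_le (c : nat -> R) (t : R) : stake_seq c -> 0 <= p <= 1/2 -> 1/2 < t ->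
  (P [set w | (t <= S_gamma beta c w)%R] <= p%:E)%E.
Proof.
move=> c_stake p_range t_gt_half; have [c_ge0 _] := c_stake.
have [N tail_lt] := stake_tail_lt c (2 * t - 1) c_stake ltac:(lra).
set s := t - (1 - series c N).
apply: (le_trans (y := P [set w | s <= partial_gain beta c N w])).
  apply: le_measure; rewrite ?inE;
    [exact: measurable_S_gamma_ge | exact: measurable_partial_gain_ge |].
  by move=> w /=; have := S_gamma_le_partial_gain beta c w N c_stake; rewrite /s; lra.
rewrite prob_partial_gain_ge lee_fin; apply: win_prob_le => //.
  by move=> _ /mapP[i _ ->].
rewrite (_ : \sum_(x <- mkseq c N) x = series c N) ?/s; first lra.
by rewrite seriesEnat /= big_map /index_iota subn0.
Qed.

Lemma prob_S_gamma_bold_play_ge (t : R) : 0 < t <= 1 ->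
  P [set w | t <= S_gamma beta bold_play w] = p%:E.
Proof.
have [_ [beta_prob _]] := iid; move=> t_range.
rewrite -(beta_prob 0%N) (_ : [set w | _] = [set w | beta 0%N w]) //.
by apply/seteqP; split => w /=; rewrite S_gamma_bold_play; case: (beta 0%N w) => /=; lra.
Qed.

End IidBernoulli.

Theorem corollary16 (R : realType) (d : measure_display) (T : measurableType d)
  (P : probability T R) (p t : R) (beta : nat -> T -> bool) :
  iid_bernoulli P p beta ->
  0 <= p -> p <= 1 / 2 -> 1 / 2 < t -> t <= 1 ->
  pi_opt P beta t = p%:E.
Proof.
move=> iid p_ge0 p_le_half t_gt_half t_le1; apply/eqP; rewrite eq_le; apply/andP; split.
  apply: ge_ereal_sup => _ [c c_stake <-].
  by apply: prob_S_gamma_ge_le => //; rewrite p_ge0.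
apply: ereal_sup_ubound; exists bold_play; first exact: bold_play_stake.
by apply: prob_S_gamma_bold_play_ge => //; apply/andP; split; lra.
Qed.
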